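(* Let $\mathcal O$ be a polycube with orthogonally convex layers, and let $1\le i\le m$. Every nonempty beam lying on the surface of the layer $\mathcal O_i$ (i.e., every nonempty top $i$-beam lying on top of $\mathcal O_i$ and every nonempty bottom $(i-1)$-beam lying on the bottom of $\mathcal O_i$) has at least one of its two anchors on the $i$-band.
   Context: A polycube $\mathcal O$ is an orthogonal polyhedron homeomorphic to a sphere formed as a union of unit cubes glued along entire faces; its surface is subdivided into unit squares called cells. Let $z_0<\dots<z_m$ be the distinct $z$-coordinates of vertices of $\mathcal O$; the $i$-plane is $z=z_i$. The layer $\mathcal O_i$ is the part of $\mathcal O$ between the $(i-1)$-plane and the $i$-plane. $\mathcal O$ has orthogonally convex layers if each $\mathcal O_i$ meets every line parallel to a coordinate axis in a single segment or not at all. The $i$-band is the set of vertical surface cells between the $(i-1)$-plane and the $i$-plane (the lateral boundary of $\mathcal O_i$). A face is a maximal edge-connected set of coplanar cells; an $i$-face is a face in the $i$-plane; it lies either on top of $\mathcal O_i$ (a top face) or on the bottom of $\mathcal O_{i+1}$ (a bottom face). Two surface pieces are adjacent if their boundaries share a cell edge. Cells are parallel if they lie in parallel planes. Beams: if a band cell $a$ (on the $i$-band or the $(i+1)$-band) has its horizontal edge $e$ lying in the $i$-plane adjacent to an $i$-face, then $i$-beam$(a)$ is the portion of that $i$-face illuminated by rays emitted from $e$ in the horizontal direction orthogonal to $a$; otherwise $i$-beam$(a)$ is empty. A nonempty $i$-beam$(a)$ has two anchors: $a$ and the band cell $b$ parallel to $a$ and adjacent to the beam at its other end ($b$ lies on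 the $i$-band or on the $(i+1)$-band); $i$-beam$(a)$ and $i$-beam$(b)$ coincide. *)

From HB Require Import structures.
From mathcomp Require Import all_boot all_order all_algebra.
From mathcomp Require Import boolp classical_sets topology.
From mathcomp Require Import Rstruct Rstruct_topology.
From Stdlib Require Rdefinitions.

Set Implicit Arguments.
Unset Strict Implicit.
Unset Printing Implicit Defensive.
Import Order.TTheory GRing.Theory Num.Theory.
Local Open Scope ring_scope.
Local Open Scope classical_set_scope.

(* A set of unit cubes: [C x y z] means the closed cube                     *)
(* [x,x+1] x [y,y+1] x [z,z+1] belongs to the polycube.                      *)
Definition cubes := int -> int -> int -> bool.

Definition point := (Rdefinitions.R * Rdefinitions.R * Rdefinitions.R)%type.

Definition in_cube (x y z : int) (p : point) : Prop :=
  [/\ x%:~R <= p.1.1 <= (x + 1)%:~R,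
      y%:~R <= p.1.2 <= (y + 1)%:~R &
      z%:~R <= p.2 <= (z + 1)%:~R].

Definition solid (C : cubes) : set point :=
  [set p | exists x y z, C x y z /\ in_cube x y z p].

Definition surface (C : cubes) : set point :=
  closure (solid C) `\` interior (solid C).

Definition unit_sphere : set point :=
  [set p | p.1.1 ^+ 2 + p.1.2 ^+ 2 + p.2 ^+ 2 = 1].

Definition homeomorphic (A B : set point) : Prop :=
  exists (f g : point -> point),
    [/\ {within A, continuous f}, {within B, continuous g},
        (forall p, A p -> B (f p) /\ g (f p) = p) &
        (forall q, B q -> A (g q) /\ f (g q) = q)].

Definition face_adj (c d : int * int * int) : bool :=
  [|| (c.1.1 == d.1.1 + 1) && (c.1.2 == d.1.2) && (c.2 == d.2),
      (d.1.1 == c.1.1 + 1) && (c.1.2 == d.1.2) && (c.2 == d.2),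
      (c.1.1 == d.1.1) && (c.1.2 == d.1.2 + 1) && (c.2 == d.2),
      (c.1.1 == d.1.1) && (d.1.2 == c.1.2 + 1) && (c.2 == d.2),
      (c.1.1 == d.1.1) && (c.1.2 == d.1.2) && (c.2 == d.2 + 1) |
      (c.1.1 == d.1.1) && (c.1.2 == d.1.2) && (d.2 == c.2 + 1)].

Definition inC (C : cubes) (c : int * int * int) : bool := C c.1.1 c.1.2 c.2.

Definition polycube (C : cubes) : Prop :=
  [/\ (exists s : seq (int * int * int),
         forall x y z, C x y z -> (x, y, z) \in s),
      (exists x y z, C x y z),
      (forall c d, inC C c -> inC C d ->
         exists p : seq (int * int * int),
           [/\ path face_adj c p, last c p = d & all (inC C) p]) &
      homeomorphic unit_sphere (surface C)].

(* Planes and layers.  A z-coordinate h is that of a vertex of O iff there   *)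
(* is a horizontal surface cell in the plane z = h.                          *)
Definition is_level (C : cubes) (h : int) : Prop :=
  exists x y, C x y (h - 1) != C x y h.

(* lo = z_(i-1) and hi = z_i for some 1 <= i <= m *)
Definition consecutive_levels (C : cubes) (lo hi : int) : Prop :=
  [/\ is_level C lo, is_level C hi, lo < hi &
      forall h, lo < h < hi -> ~ is_level C h].

Definition layer (C : cubes) (lo hi : int) : set point :=
  [set p | exists x y z, [/\ C x y z, lo <= z < hi & in_cube x y z p]].

Definition orth_convex (A : set point) : Prop :=
  [/\ (forall (y z x1 x2 x3 : Rdefinitions.R), x1 <= x2 <= x3 ->
         A (x1, y, z) -> A (x3, y, z) -> A (x2, y, z)),
      (forall (x z y1 y2 y3 : Rdefinitions.R), y1 <= y2 <= y3 ->
         A (x, y1, z) -> A (x, y3, z) -> A (x, y2, z)) &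
      (forall (x y z1 z2 z3 : Rdefinitions.R), z1 <= z2 <= z3 ->
         A (x, y, z1) -> A (x, y, z3) -> A (x, y, z2))].

Definition orth_convex_layers (C : cubes) : Prop :=
  forall lo hi, consecutive_levels C lo hi -> orth_convex (layer C lo hi).

(* Vertical cells: [VCell AX u v zc] is the unit square in the plane x = u,   *)
(* spanning y in [v,v+1], z in [zc,zc+1];  [VCell AY u v zc] is the unit      *)
(* square in the plane y = u spanning x in [v,v+1], z in [zc,zc+1].           *)
Inductive axis := AX | AY.

Record vcell := VCell { vax : axis; vu : int; vv : int; vz : int }.

(* cube membership in coordinates (u = normal coord, v = tangent coord) *)
Definition Cax (C : cubes) (ax : axis) (u v z : int) : bool :=
  match ax with AX => C u v z | AY => C v u z end.

Definition vsurf (C : cubes) (a : vcell) : bool :=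
  Cax C (vax a) (vu a - 1) (vv a) (vz a) != Cax C (vax a) (vu a) (vv a) (vz a).

(* horizontal cells of the plane z = h are indexed by (x,y): the square
   [x,x+1] x [y,y+1] x {h}. *)
Definition hpos (ax : axis) (u v : int) : int * int :=
  match ax with AX => (u, v) | AY => (v, u) end.

(* horizontal surface cell in plane z = h; t = true: top cell (cube below in O,
   lying on top of a layer), t = false: bottom cell (cube above in O) *)
Definition hsurf (C : cubes) (h : int) (t : bool) (c : int * int) : bool :=
  if t then C c.1 c.2 (h - 1) && ~~ C c.1 c.2 h
  else ~~ C c.1 c.2 (h - 1) && C c.1 c.2 h.

Definition edge_adj (c d : int * int) : bool :=
  [|| (c.1 == d.1 + 1) && (c.2 == d.2), (d.1 == c.1 + 1) && (c.2 == d.2),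
      (c.1 == d.1) && (c.2 == d.2 + 1) | (c.1 == d.1) && (d.2 == c.2 + 1)].

Definition same_face (C : cubes) (h : int) (t : bool) (c d : int * int) : Prop :=
  hsurf C h t c /\
  exists p : seq (int * int),
    [/\ path edge_adj c p, last c p = d & all (hsurf C h t) p].

Definition on_band (lo hi : int) (a : vcell) : Prop := lo <= vz a < hi.

(* [beam C h t a d k b]: a is a band cell (on the band just below or just
   above the plane z = h) whose horizontal edge e in the plane z = h is
   adjacent to a face of kind t of that plane, lying on the side d of a
   (d = true: towards increasing normal coordinate);  the h-beam(a) is the
   run of the k >= 1 cells of that face met by the rays from e orthogonal to
   a, and b is the band cell parallel to a adjacent to the beam at its other
   end (so b is the second anchor). *)
Definition beam (C : cubes) (h : int) (t : bool) (a : vcell) (d : bool)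
    (k : nat) (b : vcell) : Prop :=
  let step : int := if d then 1 else -1 in
  let s : int := if d then vu a else vu a - 1 in
  let cell (j : int) := hpos (vax a) (s + j * step) (vv a) in
  [/\ vsurf C a, vz a = h - 1 \/ vz a = h & hsurf C h t (cell 0)] /\
  [/\ (0 < k)%N,
      (forall j : nat, (j < k)%N -> same_face C h t (cell 0) (cell j%:Z)) &
      ~ same_face C h t (cell 0) (cell k%:Z)] /\
  [/\ vax b = vax a, vv b = vv a, vu b = vu a + k%:Z * step,
      vz b = h - 1 \/ vz b = h & vsurf C b].

(* A top beam of the plane z_i whose anchors both lie on the (i+1)-band
   would give, in the row of cubes of the layer O_(i+1) just above the beam,
   two cubes of O (behind the two anchors) separated by the missing cubes
   over the beam; this contradicts the orthogonal convexity of O_(i+1).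
   Bottom beams are handled symmetrically with the layer O_(i-1).  The layer
   beyond the plane exists because O is finite and has a cube behind each
   anchor. *)
From HB Require Import structures.
From mathcomp Require Import all_boot all_order all_algebra.
From mathcomp Require Import boolp classical_sets topology.
From mathcomp Require Import Rstruct Rstruct_topology.
From mathcomp Require Import zify lra.
Import Order.TTheory GRing.Theory Num.Theory.
Local Open Scope ring_scope.
Set Implicit Arguments.
Unset Strict Implicit.
Unset Printing Implicit Defensive.

Lemma int_least_above (P : int -> Prop) (h h0 : int) : h < h0 -> P h0 ->
  exists h1, [/\ h < h1, P h1 & forall z, h < z < h1 -> ~ P z].
Proof.
move=> lt_h_h0 Ph0.
pose Q (n : nat) := `[< P (h + n.+1%:Z) >].
have shiftK z : h < z -> h + (absz (z - h - 1)%R).+1%:Z = z by move=> ?; lia.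
have exQ : exists n, Q n by exists (absz (h0 - h - 1)%R); apply/asboolP; rewrite shiftK.
case: (ex_minnP exQ) => n /asboolP Pn minn.
exists (h + n.+1%:Z); split=> //; first by lia.
move=> z lt_z Pz; have /minn : Q (absz (z - h - 1)%R).
  by apply/asboolP; rewrite shiftK //; lia.
lia.
Qed.

Lemma int_greatest_below (P : int -> Prop) (h h0 : int) : h0 < h -> P h0 ->
  exists h1, [/\ h1 < h, P h1 & forall z, h1 < z < h -> ~ P z].
Proof.
move=> lt_h0_h Ph0.
have [h1 [lt_h1 Ph1 gap]] := @int_least_above (fun z => P (- z)) (- h) (- h0)
  ltac:(by rewrite ltrN2) ltac:(by rewrite /= opprK).
exists (- h1); split; [lia | exact: Ph1 |].
by move=> z lt_z; rewrite -[z]opprK; apply: gap; lia.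
Qed.

Lemma seq_int_bounded (s : seq int) : exists B : int, forall z, z \in s -> `|z| < B.
Proof.
elim: s => [|z0 s [B leB]]; first by exists 0.
by exists (`|z0| + `|B| + 1) => z; rewrite inE => /predU1P[->|/leB lt_z]; lia.
Qed.

Lemma polycube_z_bounded (C : cubes) : polycube C ->
  exists B : int, forall x y z, C x y z -> `|z| < B.
Proof.
case=> [[s cover] _ _ _]; have [B leB] := seq_int_bounded [seq c.2 | c <- s].
by exists B => x y z /cover /(map_f (fun c => c.2)) /leB.
Qed.

Lemma level_above_cube (C : cubes) (x y h : int) : polycube C -> C x y h ->
  exists h', h < h' /\ is_level C h'.
Proof.
move=> /polycube_z_bounded [B leB] Cxyh.
have [h1 [lt_h1 notC gap]] := @int_least_above (fun z => ~~ C x y z) h B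
  ltac:(by have := leB _ _ _ Cxyh; lia) ltac:(by apply/negP => /leB; lia).
have C_below : C x y (h1 - 1).
  have [->|ne] := eqVneq (h1 - 1) h; first by [].
  by apply/negPn/negP; apply: gap; lia.
by exists h1; split=> //; exists x, y; rewrite C_below (negbTE notC).
Qed.

Lemma level_below_cube (C : cubes) (x y h : int) : polycube C -> C x y h ->
  exists h', h' <= h /\ is_level C h'.
Proof.
move=> /polycube_z_bounded [B leB] Cxyh.
have [h1 [lt_h1 notC gap]] := @int_greatest_below (fun z => ~~ C x y z) h (- B)
  ltac:(by have := leB _ _ _ Cxyh; lia) ltac:(by apply/negP => /leB; lia).
have C_above : C x y (h1 + 1).
  have [->|ne] := eqVneq (h1 + 1) h; first by [].
  by apply/negPn/negP; apply: gap; lia.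
exists (h1 + 1); split; first by lia.
by exists x, y; rewrite addrK C_above (negbTE notC).
Qed.

Lemma consecutive_levels_above (C : cubes) (h h0 : int) :
  is_level C h -> h < h0 -> is_level C h0 -> exists H, consecutive_levels C h H.
Proof.
move=> lvl_h lt_h_h0 lvl_h0.
have [H [lt_h_H lvl_H gap]] := int_least_above lt_h_h0 lvl_h0.
by exists H; split.
Qed.

Lemma consecutive_levels_below (C : cubes) (h h0 : int) :
  is_level C h -> h0 < h -> is_level C h0 -> exists L, consecutive_levels C L h.
Proof.
move=> lvl_h lt_h0_h lvl_h0.
have [L [lt_L_h lvl_L gap]] := int_greatest_below lt_h0_h lvl_h0.
by exists L; split.
Qed.

(* The level of the cubes lying on the outer side of a horizontal surface
   cell of kind [t] in the plane z = h. *)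
Definition outer_level (h : int) (t : bool) : int := if t then h else h - 1.

Lemma hsurf_outer (C : cubes) (h : int) (t : bool) (ax : axis) (r v : int) :
  hsurf C h t (hpos ax r v) -> ~~ Cax C ax r v (outer_level h t).
Proof. by case: t; case: ax => /andP[]. Qed.

Lemma layer_at_outer_level (C : cubes) (h : int) (t : bool) :
  polycube C -> is_level C h -> (exists x y, C x y (outer_level h t)) ->
  exists L H, consecutive_levels C L H /\ L <= outer_level h t < H.
Proof.
move=> PC lvl_h [x [y Cxy]]; case: t Cxy => /= Cxy.
- have [h0 [lt_h_h0 lvl_h0]] := level_above_cube PC Cxy.
  have [H cons] := consecutive_levels_above lvl_h lt_h_h0 lvl_h0.
  by exists h, H; split=> //; case: cons; lia.
- have [h0 [le_h0 lvl_h0]] := level_below_cube PC Cxy.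
  have [|L cons] := consecutive_levels_below lvl_h (_ : h0 < h) lvl_h0; first by lia.
  by exists L, h; split=> //; case: cons; lia.
Qed.

Definition row_convex (f : int -> bool) : Prop :=
  forall p q r, p <= r <= q -> f p -> f q -> f r.

(* [f (u - 1) != f u] means that a surface cell of the row separates u - 1 from u. *)
Lemma row_convex_walls (f : int -> bool) (u w : int) : row_convex f -> u < w ->
  ~~ f u -> ~~ f (w - 1) -> f (u - 1) != f u -> f (w - 1) != f w -> False.
Proof.
move=> convex lt_u_w /negbTE fu /negbTE fw1; rewrite fu fw1.
case: (boolP (f (u - 1))) => // fu1; case: (boolP (f w)) => // fw _ _.
suff : f u by rewrite fu.
by apply: (convex (u - 1) w) => //; lia.
Qed.

Lemma same_face_hsurf (C : cubes) (h : int) (t : bool) (c d : int * int) :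
  same_face C h t c d -> hsurf C h t d.
Proof.
case=> surf_c [p [_ <- /allP surf_p]].
by have := mem_last c p; rewrite inE => /predU1P[->|/surf_p ->].
Qed.

Lemma beam_outer_row_not_convex (C : cubes) (h : int) (t : bool) (a b : vcell)
    (d : bool) (k : nat) :
  beam C h t a d k b -> vz a = outer_level h t -> vz b = outer_level h t ->
  ~ row_convex (fun r => Cax C (vax a) r (vv a) (outer_level h t)).
Proof.
move=> [[wall_a _ /hsurf_outer first] [[k_gt0 face _] [ax_b v_b u_b _ wall_b]]].
move=> za zb convex.
have /face/same_face_hsurf/hsurf_outer last : (k.-1 < k)%N by rewrite ltn_predL.
rewrite /vsurf ax_b v_b u_b za zb in wall_a wall_b.
move: wall_a wall_b first last {face u_b}; rewrite mul0r addr0.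
case: d => /= wall_a wall_b first last.
- apply: (row_convex_walls convex _ first _ wall_a wall_b); first by lia.
  by have -> : vu a + k%:Z * 1 - 1 = vu a + (k.-1)%:Z * 1 by lia.
- apply: (row_convex_walls convex _ _ first wall_b wall_a); first by lia.
  by have -> : vu a + k%:Z * -1 = vu a - 1 + (k.-1)%:Z * -1 by lia.
Qed.

Definition mid (x : int) : Rdefinitions.R := x%:~R + 1 / 2.

Lemma mid_in_unit (x : int) : x%:~R <= mid x <= (x + 1)%:~R.
Proof. by rewrite /mid intrD; apply/andP; split; lra. Qed.

Lemma mid_in_unitP (x x' : int) : x%:~R <= mid x' <= (x + 1)%:~R -> x = x'.
Proof.
rewrite /mid intrD => /andP[le1 le2].
have : x%:~R < (x' + 1)%:~R :> Rdefinitions.R by rewrite intrD; lra.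
have : x'%:~R < (x + 1)%:~R :> Rdefinitions.R by rewrite intrD; lra.
rewrite !ltr_int; lia.
Qed.

Lemma layer_midE (C : cubes) (L H x y z : int) : L <= z < H ->
  layer C L H (mid x, mid y, mid z) <-> C x y z.
Proof.
move=> z_in; split.
- by case=> x' [y' [z' [Cxyz _ [/mid_in_unitP <- /mid_in_unitP <- /mid_in_unitP <-]]]].
- by move=> Cxyz; exists x, y, z; split=> //; split; exact: mid_in_unit.
Qed.

Lemma layer_row_convex (C : cubes) (L H : int) (ax : axis) (v z : int) :
  orth_convex_layers C -> consecutive_levels C L H -> L <= z < H ->
  row_convex (fun r => Cax C ax r v z).
Proof.
move=> convex /convex [along_x along_y _] z_in p q r /andP[le_pr le_rq].
have mid_le (m n : int) : m <= n -> mid m <= mid n by rewrite lerD2r ler_int.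
case: ax => /= Cp Cq; rewrite -(layer_midE _ _ _ z_in).
- by apply: (along_x _ _ (mid p) _ (mid q)); rewrite ?mid_le ?layer_midE.
- by apply: (along_y _ _ (mid p) _ (mid q)); rewrite ?mid_le ?layer_midE.
Qed.

Lemma vsurf_level_nonempty (C : cubes) (a : vcell) :
  vsurf C a -> exists x y, C x y (vz a).
Proof.
have Cax_cube u : Cax C (vax a) u (vv a) (vz a) -> exists x y, C x y (vz a).
  by case: (vax a) => /= Cu; [exists u, (vv a) | exists (vv a), u].
move=> /negP wall; case: (boolP (Cax C (vax a) (vu a) (vv a) (vz a))) => [|notC].
  exact: Cax_cube.
apply: (Cax_cube (vu a - 1)); apply/negPn/negP => notC1.
by apply: wall; rewrite (negbTE notC) (negbTE notC1).
Qed.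

Lemma beam_anchors_not_both_outer (C : cubes) (h : int) (t : bool) (a b : vcell)
    (d : bool) (k : nat) :
  polycube C -> orth_convex_layers C -> is_level C h -> beam C h t a d k b ->
  vz a = outer_level h t -> vz b = outer_level h t -> False.
Proof.
move=> PC convex lvl_h beam_ab za zb.
have [[wall_a _ _] _] := beam_ab.
have nonempty := vsurf_level_nonempty wall_a; rewrite za in nonempty.
have [L [H [cons z_in]]] := layer_at_outer_level PC lvl_h nonempty.
apply: (beam_outer_row_not_convex beam_ab za zb).
exact: layer_row_convex convex cons z_in.
Qed.

Theorem lemma3 (C : cubes) (lo hi : int) :
  polycube C -> orth_convex_layers C -> consecutive_levels C lo hi ->
  forall (a b : vcell) (d : bool) (k : nat),
    (beam C hi true a d k b -> on_band lo hi a \/ on_band lo hi b) /\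
    (beam C lo false a d k b -> on_band lo hi a \/ on_band lo hi b).
Proof.
move=> PC convex [lvl_lo lvl_hi lt_lo_hi _] a b d k; rewrite /on_band.
split=> beam_ab; have [[_ za _] [_ [_ _ _ zb _]]] := beam_ab.
- case: za => [->|za]; first by left; lia.
  case: zb => [->|zb]; first by right; lia.
  by case: (beam_anchors_not_both_outer PC convex lvl_hi beam_ab za zb).
- case: za => [za|->]; last by left; lia.
  case: zb => [zb|->]; last by right; lia.
  by case: (beam_anchors_not_both_outer PC convex lvl_lo beam_ab za zb).
Qed.
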